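(* Let $R$ and $S$ be commutative rings with identity, $f:R\to S$ a ring homomorphism, and $J$ a nonzero proper ideal of $S$. (1) If $J\subseteq\operatorname{Nil}(S)$, then $R\bowtie^f J$ is compactly packed if and only if $R$ is compactly packed. (2) For any $R$-module $M$, the trivial extension $R\ltimes M$ is compactly packed if and only if $R$ is compactly packed.
   Context: $R\bowtie^f J:=\{(r,f(r)+j)\mid r\in R,\ j\in J\}$, a subring of $R\times S$. $\operatorname{Nil}(S)$ is the nilradical of $S$. The trivial extension $R\ltimes M$ is the ring $R\oplus M$ with multiplication $(r,m)(r',m')=(rr',rm'+r'm)$. A commutative ring $A$ is compactly packed if whenever an ideal $I$ of $A$ is contained in the union of a family $\{\mathfrak{p}_i\}_i$ of prime ideals of $A$, then $I\subseteq\mathfrak{p}_i$ for some $i$. *)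

From HB Require Import structures.
From mathcomp Require Import all_boot all_order all_algebra.
From mathcomp Require Import boolp ring.
Set Implicit Arguments. Unset Strict Implicit. Unset Printing Implicit Defensive.
Import GRing.Theory.
Local Open Scope ring_scope.

Definition is_ideal (A : comPzRingType) (I : A -> Prop) : Prop :=
  [/\ I 0, (forall x y, I x -> I y -> I (x - y)) & (forall a x, I x -> I (a * x))].

Definition is_prime_ideal (A : comPzRingType) (P : A -> Prop) : Prop :=
  [/\ is_ideal P, ~ P 1 & (forall x y, P (x * y) -> P x \/ P y)].

Definition compactly_packed (A : comPzRingType) : Prop :=
  forall (I : A -> Prop) (Idx : Type) (p : Idx -> A -> Prop),
    is_ideal I -> (forall i, is_prime_ideal (p i)) ->
    (forall x, I x -> exists i, p i x) ->
    exists i, forall x, I x -> p i x.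

Definition nilradical (S : comPzRingType) (x : S) : Prop := exists n : nat, x ^+ n = 0.

Definition amalg_pred (R S : comPzRingType) (f : {rmorphism R -> S}) (J : S -> Prop)
  : pred (R * S)%type := fun x => `[< exists r j, J j /\ x = (r, f r + j) >].

Record amalg (R S : comPzRingType) (f : {rmorphism R -> S}) (J : S -> Prop)
    (HJ : is_ideal J) := Amalg {
  amalg_val : (R * S)%type;
  amalg_valP : amalg_val \in amalg_pred f J }.

Section AmalgRing.
Variables (R S : comPzRingType) (f : {rmorphism R -> S}) (J : S -> Prop) (HJ : is_ideal J).

Lemma amalg_predE x : (x \in amalg_pred f J) <-> J (x.2 - f x.1).
Proof.
rewrite /in_mem /= /amalg_pred; split.
  move=> /asboolP [r [j [Jj ->]]] /=; by rewrite addrC addKr.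
move=> Jx; apply/asboolP; exists x.1, (x.2 - f x.1); split => //.
by case: x Jx => a b /= _; rewrite addrC subrK.
Qed.

Lemma amalg_subring : subring_closed (amalg_pred f J).
Proof.
case: HJ => J0 JB JM.
split.
- apply/amalg_predE; rewrite /= rmorph1 subrr //.
- move=> x y /amalg_predE Jx /amalg_predE Jy; apply/amalg_predE => /=.
  have -> : x.2 - y.2 - f (x.1 - y.1) = (x.2 - f x.1) - (y.2 - f y.1).
    by rewrite rmorphB /=; ring.
  exact: JB.
- move=> x y /amalg_predE Jx /amalg_predE Jy; apply/amalg_predE => /=.
  have -> : x.2 * y.2 - f (x.1 * y.1)
          = x.2 * (y.2 - f y.1) - (0 - (f y.1 * (x.2 - f x.1))).
    by rewrite rmorphM /=; ring.
  apply: (JB); first exact: JM.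
  by apply: (JB) => //; apply: JM.
Qed.

HB.instance Definition _ := [isSub for @amalg_val R S f J HJ].
HB.instance Definition _ := [Choice of amalg f HJ by <:].
HB.instance Definition _ :=
  GRing.SubChoice_isSubComPzRing.Build (R * S)%type (amalg_pred f J) (amalg f HJ) amalg_subring.
End AmalgRing.

Definition triv_ext (R : comPzRingType) (M : lmodType R) : Type := (R * M)%type.

Section TrivExt.
Variables (R : comPzRingType) (M : lmodType R).
Local Notation T := (triv_ext M).
HB.instance Definition _ := GRing.Zmodule.on T.

Definition te_one : T := (1, 0).
Definition te_mul (x y : T) : T := (x.1 * y.1, x.1 *: y.2 + y.1 *: x.2).

Lemma te_mulA : associative te_mul.
Proof.
move=> [a m] [b n] [c p]; rewrite /te_mul /=.
rewrite !scalerDr !scalerA (@mulrA R) [c * a](@mulrC R) [c * b](@mulrC R) addrA.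
done.
Qed.

Lemma te_mulC : commutative te_mul.
Proof. by move=> [a m] [b n]; rewrite /te_mul /= mulrC addrC. Qed.

Lemma te_mul1 : left_id te_one te_mul.
Proof. by move=> [a m]; rewrite /te_mul /te_one /= mul1r scale1r scaler0 addr0. Qed.

Lemma te_mulDl : left_distributive te_mul +%R.
Proof.
move=> [a m] [b n] [c p]; rewrite /te_mul /=; congr pair; first by rewrite mulrDl.
by rewrite scalerDl scalerDr !addrA; congr (_ + _); rewrite addrAC.
Qed.

HB.instance Definition _ := GRing.Zmodule_isComPzRing.Build T te_mulA te_mulC te_mul1 te_mulDl.
End TrivExt.

(* Every prime ideal contains every nilpotent element, hence the kernel of a
   surjective ring morphism [pi : A -> B] with nil kernel.  So [pi] maps ideals
   to ideals and primes to primes, preimages of primes are primes, and a prime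
   of [A] is the preimage of its image: a covering of an ideal by primes moves
   back and forth along [pi], and with it compact packedness.  Both projections
   [R ⋈^f J -> R] (kernel [0 × J], nil when [J] is) and [R ⋉ M -> R]
   (kernel [0 × M], of square zero) are such morphisms. *)
From HB Require Import structures.
From mathcomp Require Import all_boot all_order all_algebra.
From mathcomp Require Import boolp.
Import GRing.Theory.
Local Open Scope ring_scope.
Set Implicit Arguments. Unset Strict Implicit.

Lemma nilradical_pair (R1 R2 : comPzRingType) (x : R1 * R2) :
  nilradical x.1 -> nilradical x.2 -> nilradical x.
Proof.
case=> m x1m0 [n x2n0]; exists (m + n)%N.
apply/eqP; rewrite [_ ^+ _]surjective_pairing xpair_eqE.
by rewrite !rmorphXn /= !exprD x1m0 x2n0 mul0r mulr0 !eqxx.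
Qed.

Lemma nilradical_inj (A B : comPzRingType) (g : {rmorphism A -> B}) x :
  injective g -> nilradical (g x) -> nilradical x.
Proof.
by move=> g_inj [n gxn0]; exists n; apply: g_inj; rewrite rmorphXn rmorph0.
Qed.

Section PrimeIdeal.
Variables (A : comPzRingType) (P : A -> Prop).
Hypothesis P_prime : is_prime_ideal P.

Lemma prime_ideal0 : P 0.
Proof. by case: P_prime => -[]. Qed.

Lemma prime_idealB x y : P x -> P y -> P (x - y).
Proof. by case: P_prime => -[_ PB _] _ _; apply: PB. Qed.

Lemma prime_idealXn x n : P (x ^+ n) -> P x.
Proof.
case: P_prime => _ notP1 PM; elim: n => [|n IHn]; first by rewrite expr0.
by rewrite exprS => /PM[|/IHn].
Qed.

Lemma prime_ideal_nilradical x : nilradical x -> P x.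
Proof.
by case=> n xn0; apply: (@prime_idealXn x n); rewrite xn0; apply: prime_ideal0.
Qed.

End PrimeIdeal.

Section Preimage.
Variables (A B : comPzRingType) (pi : {rmorphism A -> B}).

Lemma ideal_preim (I : B -> Prop) : is_ideal I -> is_ideal (I \o pi).
Proof.
case=> I0 IB IM; split=> /= [|x y Ix Iy|a x Ix]; first by rewrite rmorph0.
- by rewrite rmorphB; apply: IB.
- by rewrite rmorphM; apply: IM.
Qed.

Lemma prime_ideal_preim (P : B -> Prop) :
  is_prime_ideal P -> is_prime_ideal (P \o pi).
Proof.
case=> P_ideal notP1 PM; split=> /= [||x y]; first exact: ideal_preim.
- by rewrite rmorph1.
- by rewrite rmorphM => /PM.
Qed.

End Preimage.

Section NilSurjection.
Variables (A B : comPzRingType) (pi : {rmorphism A -> B}).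
Hypotheses (pi_surj : forall b, exists a, pi a = b)
           (pi_ker_nil : forall x, pi x = 0 -> nilradical x).

Definition image_of (I : A -> Prop) (b : B) : Prop := exists2 a, I a & pi a = b.

(* [x - y] lies in the kernel, hence is nilpotent, hence lies in [P]. *)
Lemma prime_ideal_fibre (P : A -> Prop) x y :
  is_prime_ideal P -> pi x = pi y -> P x -> P y.
Proof.
move=> P_prime pixy Px.
have Pxy : P (x - y).
  apply: (prime_ideal_nilradical P_prime); apply: pi_ker_nil.
  by rewrite rmorphB pixy subrr.
by rewrite -[y](subKr x); apply: prime_idealB.
Qed.

Lemma ideal_image (I : A -> Prop) : is_ideal I -> is_ideal (image_of I).
Proof.
case=> I0 IB IM; split=> [|_ _ [a Ia <-] [c Ic <-]|r _ [a Ia <-]].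
- by exists 0; rewrite ?rmorph0.
- by exists (a - c); [apply: IB | rewrite rmorphB].
- by have [s <-] := pi_surj r; exists (s * a); [apply: IM | rewrite rmorphM].
Qed.

Lemma prime_ideal_image (P : A -> Prop) :
  is_prime_ideal P -> is_prime_ideal (image_of P).
Proof.
move=> P_prime; have [P_ideal notP1 PM] := P_prime.
split=> [|[a Pa pia1]|x y [a Pa pia]]; first exact: ideal_image.
- apply: notP1; apply: (prime_ideal_fibre P_prime _ Pa).
  by rewrite pia1 rmorph1.
- have [[u piu] [v piv]] := (pi_surj x, pi_surj y).
  have /PM[Pu|Pv] : P (u * v).
    by apply: (prime_ideal_fibre P_prime _ Pa); rewrite pia rmorphM piu piv.
  + by left; exists u.
  + by right; exists v.
Qed.

Lemma compactly_packed_nil_surj : compactly_packed A <-> compactly_packed B.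
Proof.
split=> [cpA I Idx p I_ideal p_prime Icov | cpB I Idx p I_ideal p_prime Icov].
- have [i Ii] := cpA (I \o pi) Idx (fun i => p i \o pi) (ideal_preim pi I_ideal)
    (fun i => prime_ideal_preim pi (p_prime i)) (fun x => Icov (pi x)).
  exists i => b; have [a <-] := pi_surj b; exact: Ii.
- have imIcov b : image_of I b -> exists i, image_of (p i) b.
    by case=> a /Icov[i pia] <-; exists i; exists a.
  have [i Ii] := cpB (image_of I) Idx (fun i => image_of (p i))
    (ideal_image I_ideal) (fun i => prime_ideal_image (p_prime i)) imIcov.
  exists i => x Ix; have [a pia pix] := Ii (pi x) (ex_intro2 _ _ x Ix erefl).
  exact: (prime_ideal_fibre (p_prime i) pix).
Qed.

End NilSurjection.

Section AmalgProjection.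
Variables (R S : comPzRingType) (f : {rmorphism R -> S}).
Variables (J : S -> Prop) (HJ : is_ideal J).

Definition amalg_fst : {rmorphism amalg f HJ -> R} := fst \o val.

Lemma amalg_fst_surj r : exists x, amalg_fst x = r.
Proof.
have frJ : (r, f r) \in amalg_pred f J.
  by apply/amalg_predE; rewrite subrr; case: HJ.
by exists (Sub (r, f r) frJ).
Qed.

Lemma amalg_fst_ker_nil :
  (forall s, J s -> nilradical s) -> forall x, amalg_fst x = 0 -> nilradical x.
Proof.
move=> Jnil x x10; apply: (nilradical_inj (g := val)) val_inj _.
apply: nilradical_pair; first by exists 1%N; rewrite expr1.
apply: Jnil; have /amalg_predE := valP x.
by rewrite [X in f X]x10 rmorph0 subr0.
Qed.

End AmalgProjection.

Section TrivExtProjection.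
Variables (R : comPzRingType) (M : lmodType R).

Definition te_fst (x : triv_ext M) : R := x.1.

Fact te_fst_is_zmod_morphism : zmod_morphism te_fst. Proof. by []. Qed.
HB.instance Definition _ :=
  GRing.isZmodMorphism.Build (triv_ext M) R te_fst te_fst_is_zmod_morphism.

Fact te_fst_is_monoid_morphism : monoid_morphism te_fst. Proof. by []. Qed.
HB.instance Definition _ :=
  GRing.isMonoidMorphism.Build (triv_ext M) R te_fst te_fst_is_monoid_morphism.

Lemma te_fst_surj r : exists x, te_fst x = r.
Proof. by exists ((r, 0) : triv_ext M). Qed.

Lemma te_fst_ker_sqr0 (x : triv_ext M) : te_fst x = 0 -> x ^+ 2 = 0.
Proof.
case: x => a m /= a0; rewrite /te_fst /= in a0.
by rewrite expr2 /GRing.mul /= /te_mul /= a0 mul0r scale0r addr0.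
Qed.

End TrivExtProjection.

Theorem corollary4p4 :
  (forall (R S : comPzRingType) (f : {rmorphism R -> S}) (J : S -> Prop)
          (HJ : is_ideal J),
     (exists j, J j /\ j <> 0) ->          (* J nonzero *)
     (exists s, ~ J s) ->                  (* J proper *)
     (forall x, J x -> nilradical x) ->    (* J ⊆ Nil(S) *)
     (compactly_packed (amalg f HJ) <-> compactly_packed R))
  /\
  (forall (R : comPzRingType) (M : lmodType R),
     compactly_packed (triv_ext M) <-> compactly_packed R).
Proof.
split=> [R S f J HJ _ _ Jnil | R M].
- exact: compactly_packed_nil_surj (@amalg_fst_surj _ _ f _ HJ)
    (amalg_fst_ker_nil Jnil).
- apply: (compactly_packed_nil_surj (@te_fst_surj _ M)).
  by move=> x /te_fst_ker_sqr0 x2; exists 2%N.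
Qed.
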